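(* Let $\mathbf M$ be an $(N+1,k)$-admissible and micro-reversible matrix, written in canonical form with transient states $0,\dots,N-k$ and characteristic triple $(\mu,\widetilde{\mathbf w},\widetilde{\mathbf z})$, and let $\phi:\mathbb R^+\to\mathbb R$ be convex. For a probability vector $\mathbf p\in\mathbb R^{N+1}$ with transient part $\widetilde{\mathbf p}=(p_i)_{i=0,\dots,N-k}$ define $$G_\phi(\mathbf p|\overline{\boldsymbol\pi}):=\begin{cases}\sum_{i=0}^{N-k}\phi\Big(\frac{\widetilde p_i}{\widetilde z_i\langle\widetilde{\mathbf w},\widetilde{\mathbf p}\rangle}\Big)\widetilde w_i\widetilde z_i&\text{if }\langle\widetilde{\mathbf w},\widetilde{\mathbf p}\rangle\neq0,\\ +\infty&\text{otherwise.}\end{cases}$$ Then there is $h_0>0$ depending only on $\mathbf M$ such that for every $h\in(0,h_0)$ and every probability vector $\mathbf p$, with $\mathbf M^{(h)}:=\mathbf I+h(\mathbf M-\mathbf I)$, $$G_\phi(\mathbf M^{(h)}\mathbf p|\overline{\boldsymbol\pi})\le G_\phi(\mathbf p|\overline{\boldsymbol\pi}).$$ Furthermore, if $\phi(x)\ge x-1$ for all $x\ge0$, then $G_\phi(\mathbf p|\overline{\boldsymbol\pi})\ge0$ for every probability vector $\mathbf p$.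
   Context: Column-stochastic matrices. For $1\le k<N-1$, an $(N+1)\times(N+1)$ column-stochastic $\mathbf M$ is $(N+1,k)$-admissible if, after a simultaneous permutation of rows and columns, $\mathbf M=\begin{pmatrix}\widetilde{\mathbf M}&\mathbf 0\\ \mathbf A&\mathbf I\end{pmatrix}$ with $\mathbf I$ the $k\times k$ identity, $\widetilde{\mathbf M}$ irreducible of size $N+1-k$ (the core, indexed by the transient states $0,\dots,N-k$; the last $k$ states are absorbing) and $\mathbf A$ with no zero row. The characteristic triple is $\mu=\rho(\widetilde{\mathbf M})\in(0,1)$ together with the positive left/right eigenvectors $\widetilde{\mathbf w},\widetilde{\mathbf z}$ of the core for $\mu$, normalised by $\langle\widetilde{\mathbf w},\mathbf 1\rangle=\langle\widetilde{\mathbf w},\widetilde{\mathbf z}\rangle=1$. $\mathbf M$ is micro-reversible if $\widetilde w_i\widetilde M_{ij}\widetilde z_j=\widetilde w_j\widetilde M_{ji}\widetilde z_i$ for all $i,j$. The notation $\overline{\boldsymbol\pi}$ refers to the reference measure $(\widetilde{\mathbf w}\circ\widetilde{\mathbf z},\mathbf 0)$ extended by zeros on the absorbing states. *)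

From HB Require Import structures.
From mathcomp Require Import all_boot all_order all_algebra.
From mathcomp Require Import reals constructive_ereal.
From mathcomp Require Import complex.

Set Implicit Arguments.
Unset Strict Implicit.
Unset Printing Implicit Defensive.

Import Order.TTheory GRing.Theory Num.Theory.
Local Open Scope ring_scope.

Section Defs.
Variable R : realType.

Definition column_stochastic (n : nat) (M : 'M[R]_n) : Prop :=
  (forall i j, 0 <= M i j) /\ (forall j, \sum_i M i j = 1).

Definition irreducible_mx (n : nat) (A : 'M[R]_n) : Prop :=
  (forall i j, 0 <= A i j) /\ (forall i j, exists m : nat, 0 < (A ^+ m) i j).

Definition is_complex_eigenvalue (n : nat) (A : 'M[R]_n) (lam : R[i]) : Prop :=
  exists2 v : 'cV[R[i]]_n, v != 0 & map_mx (fun x => (x%:C)%C) A *m v = lam *: v.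

Definition is_spectral_radius (n : nat) (A : 'M[R]_n) (mu : R) : Prop :=
  (exists2 lam, is_complex_eigenvalue A lam & `|lam| = (mu%:C)%C) /\
  (forall lam, is_complex_eigenvalue A lam -> `|lam| <= (mu%:C)%C).

(* canonical form: the transient states are the indices < N.+1 - k,
   the absorbing ones the indices >= N.+1 - k *)
Definition tr_ord (N k : nat) (i : 'I_(N.+1 - k)) : 'I_N.+1 :=
  widen_ord (leq_subr k N.+1) i.

Definition core (N k : nat) (M : 'M[R]_N.+1) : 'M[R]_(N.+1 - k) :=
  \matrix_(i, j) M (tr_ord i) (tr_ord j).

Definition transient_part (N k : nat) (p : 'cV[R]_N.+1) : 'cV[R]_(N.+1 - k) :=
  \col_i p (tr_ord i) 0.

Definition admissible_canonical (N k : nat) (M : 'M[R]_N.+1) : Prop :=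
  [/\ (1 <= k)%N /\ (k < N - 1)%N,
      column_stochastic M /\ irreducible_mx (core k M),
      (forall i j : 'I_N.+1, (i < N.+1 - k)%N -> (N.+1 - k <= j)%N -> M i j = 0),
      (forall i j : 'I_N.+1, (N.+1 - k <= i)%N -> (N.+1 - k <= j)%N ->
          M i j = (i == j)%:R) &
      (forall i : 'I_N.+1, (N.+1 - k <= i)%N ->
          exists2 j : 'I_N.+1, (j < N.+1 - k)%N & M i j != 0)].

Definition characteristic_triple (N k : nat) (M : 'M[R]_N.+1) (mu : R)
  (w z : 'cV[R]_(N.+1 - k)) : Prop :=
  [/\ is_spectral_radius (core k M) mu,
      (forall i, 0 < w i 0) /\ (forall i, 0 < z i 0),
      (w^T *m core k M = mu *: w^T), (core k M *m z = mu *: z) &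
      \sum_i w i 0 = 1 /\ \sum_i w i 0 * z i 0 = 1].

Definition micro_reversible (N k : nat) (M : 'M[R]_N.+1)
  (w z : 'cV[R]_(N.+1 - k)) : Prop :=
  forall i j, w i 0 * core k M i j * z j 0 = w j 0 * core k M j i * z i 0.

Definition probability_vector (n : nat) (p : 'cV[R]_n) : Prop :=
  (forall i, 0 <= p i 0) /\ \sum_i p i 0 = 1.

Definition convex_on_nonneg (phi : R -> R) : Prop :=
  forall x y t : R, 0 <= x -> 0 <= y -> 0 <= t <= 1 ->
    phi (t * x + (1 - t) * y) <= t * phi x + (1 - t) * phi y.

Definition Mh (n : nat) (M : 'M[R]_n) (h : R) : 'M[R]_n :=
  1%:M + h *: (M - 1%:M).

Definition G_phi (N k : nat) (phi : R -> R) (w z : 'cV[R]_(N.+1 - k))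
  (p : 'cV[R]_N.+1) : \bar R :=
  let pt := transient_part k p in
  let s := \sum_i w i 0 * pt i 0 in
  if s != 0 then
    (\sum_i phi (pt i 0 / (z i 0 * s)) * w i 0 * z i 0)%:E
  else +oo%E.

End Defs.

Arguments characteristic_triple {R N} k M mu w z.
Arguments micro_reversible {R N} k M w z.
Arguments G_phi {R N} k phi w z p.
Arguments core {R N} k M.
Arguments transient_part {R N} k p.

(* On the transient states M^(h) acts through its core A = (1 - h) I + h C,
   C the core of M.  Since C >= 0 has the positive eigenvectors w^T and z for
   mu >= 0, A has them for lam = 1 - h + h mu, which is positive once h < 1;
   so h0 = 1 works and <w, A q> = lam <w, q>.  The ratios
   x_i = q_i / (z_i <w, q>) are then transported by the Doob kernel
   K_ij = A_ij z_j / (lam z_i), which is stochastic because A z = lam z and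
   leaves the weights w_i z_i invariant because w^T A = lam w^T.  Jensen's
   inequality on each row of K makes G_phi decrease.  Nonnegativity: phi(x) >= x - 1 and
   sum_i x_i w_i z_i = 1 = sum_i w_i z_i. *)
Set Warnings "-notation-overridden,-ambiguous-paths".
From HB Require Import structures.
From mathcomp Require Import all_boot all_order all_algebra.
From mathcomp Require Import reals constructive_ereal.
From mathcomp Require Import complex.
From mathcomp Require Import ring zify.

Set Implicit Arguments.
Unset Strict Implicit.
Unset Printing Implicit Defensive.

Import Order.TTheory GRing.Theory Num.Theory.
Local Open Scope ring_scope.

Section Jensen.
Variables (R : realType) (phi : R -> R).
Hypothesis phi_convex : convex_on_nonneg phi.

Lemma convex_on_nonneg_jensen_seq (I : eqType) (r : seq I) (a x : I -> R) :
  (forall i, 0 <= a i) -> (forall i, 0 <= x i) -> 0 < \sum_(i <- r) a i ->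
  (\sum_(i <- r) a i) * phi ((\sum_(i <- r) a i * x i) / \sum_(i <- r) a i)
  <= \sum_(i <- r) a i * phi (x i).
Proof.
move=> a_ge0 x_ge0; elim: r => [|j r IH]; first by rewrite big_nil ltxx.
rewrite !big_cons.
set S' := \sum_(i <- r) a i in IH *.
set Y := \sum_(i <- r) a i * x i in IH *.
set Z := \sum_(i <- r) a i * phi (x i) in IH *.
have S'_ge0 : 0 <= S' by apply: sumr_ge0.
have [S'0 aj_gt0|S'_neq0 S_gt0] := eqVneq S' 0.
  have a0 i : i \in r -> a i = 0.
    by move: S'0 => /eqP; rewrite psumr_eq0 // => /allP/(_ i) H /H/eqP.
  have -> : Y = 0 by apply: big1_seq => i /andP[_ /a0 ->]; rewrite mul0r.
  have -> : Z = 0 by apply: big1_seq => i /andP[_ /a0 ->]; rewrite mul0r.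
  rewrite S'0 !addr0 in aj_gt0 *.
  by rewrite mulrAC divff ?mul1r ?gt_eqF.
have S'_gt0 : 0 < S' by rewrite lt_def S'_neq0.
set S := a j + S' in S_gt0 *.
have S_neq0 : S != 0 by rewrite gt_eqF.
have t01 : 0 <= a j / S <= 1.
  apply/andP; split; first exact: divr_ge0 (a_ge0 j) (ltW S_gt0).
  by rewrite ler_pdivrMr // mul1r /S lerDl.
have Y_ge0 : 0 <= Y by apply: sumr_ge0 => i _; apply: mulr_ge0.
have := phi_convex (x_ge0 j) (divr_ge0 Y_ge0 S'_ge0) t01.
have -> : a j / S * x j + (1 - a j / S) * (Y / S') = (a j * x j + Y) / S.
  by rewrite /S; field; rewrite -/S S_neq0 S'_neq0.
rewrite -(ler_pM2l S_gt0) => convexity.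
apply: le_trans convexity _.
have -> : S * (a j / S * phi (x j) + (1 - a j / S) * phi (Y / S'))
          = a j * phi (x j) + S' * phi (Y / S').
  by rewrite /S; field; rewrite -/S S_neq0.
by rewrite lerD2l IH.
Qed.

Lemma convex_on_nonneg_jensen (I : finType) (a x : I -> R) :
  (forall i, 0 <= a i) -> (forall i, 0 <= x i) -> \sum_i a i = 1 ->
  phi (\sum_i a i * x i) <= \sum_i a i * phi (x i).
Proof.
move=> a_ge0 x_ge0 a1.
have := convex_on_nonneg_jensen_seq (r := index_enum I) a_ge0 x_ge0.
by rewrite a1 ltr01 mul1r divr1; apply.
Qed.

Lemma sum_convex_stochastic_le (I : finType) (pi : I -> R) (K : I -> I -> R)
    (x : I -> R) :
  (forall i, 0 <= pi i) -> (forall i j, 0 <= K i j) ->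
  (forall i, \sum_j K i j = 1) -> (forall j, \sum_i pi i * K i j = pi j) ->
  (forall j, 0 <= x j) ->
  \sum_i pi i * phi (\sum_j K i j * x j) <= \sum_j pi j * phi (x j).
Proof.
move=> pi_ge0 K_ge0 K_stochastic pi_invariant x_ge0.
apply: le_trans (_ : _ <= \sum_i pi i * \sum_j K i j * phi (x j)) _.
  by apply: ler_sum => i _; rewrite ler_wpM2l // convex_on_nonneg_jensen.
under eq_bigr do rewrite mulr_sumr.
rewrite exchange_big /=; apply: ler_sum => j _.
by under eq_bigr do rewrite mulrA; rewrite -mulr_suml pi_invariant.
Qed.

End Jensen.

Definition mass (R : realType) (n : nat) (w q : 'cV[R]_n) : R :=
  \sum_i w i 0 * q i 0.

Definition phi_divergence (R : realType) (n : nat) (phi : R -> R)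
    (w z q : 'cV[R]_n) : R :=
  \sum_i phi (q i 0 / (z i 0 * mass w q)) * w i 0 * z i 0.

Lemma mass_gt0 (R : realType) (n : nat) (w q : 'cV[R]_n) :
  (forall i, 0 <= w i 0) -> (forall i, 0 <= q i 0) -> mass w q != 0 ->
  0 < mass w q.
Proof.
move=> w_ge0 q_ge0; rewrite lt_def => ->.
by apply: sumr_ge0 => i _; apply: mulr_ge0.
Qed.

Lemma phi_divergence_ge0 (R : realType) (n : nat) (phi : R -> R)
    (w z q : 'cV[R]_n) :
  (forall x, 0 <= x -> x - 1 <= phi x) ->
  (forall i, 0 < w i 0) -> (forall i, 0 < z i 0) -> \sum_i w i 0 * z i 0 = 1 ->
  (forall i, 0 <= q i 0) -> 0 < mass w q ->
  0 <= phi_divergence phi w z q.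
Proof.
move=> phi_ge w_gt0 z_gt0 wz1 q_ge0 s_gt0.
have z_neq0 i : z i 0 != 0 by rewrite gt_eqF.
have s_neq0 : mass w q != 0 by rewrite gt_eqF.
apply: le_trans
  (_ : _ <= \sum_i (q i 0 / (z i 0 * mass w q) - 1) * w i 0 * z i 0) _.
  under eq_bigr => i _.
    have -> : (q i 0 / (z i 0 * mass w q) - 1) * w i 0 * z i 0
              = w i 0 * q i 0 / mass w q - w i 0 * z i 0.
      by field; rewrite z_neq0 s_neq0.
  over.
  by rewrite sumrB -mulr_suml divff // wz1 subrr.
apply: ler_sum => i _.
rewrite -!mulrA ler_wpM2r ?mulr_ge0 ?(ltW (w_gt0 i)) ?(ltW (z_gt0 i)) //.
by apply: phi_ge; rewrite divr_ge0 ?mulr_ge0 ?(ltW (z_gt0 i)) ?(ltW s_gt0).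
Qed.

Section PerronDivergence.
Variables (R : realType) (n : nat) (A : 'M[R]_n) (lam : R) (w z : 'cV[R]_n).
Hypotheses (A_ge0 : forall i j, 0 <= A i j) (lam_gt0 : 0 < lam)
  (w_gt0 : forall i, 0 < w i 0) (z_gt0 : forall i, 0 < z i 0)
  (wA : w^T *m A = lam *: w^T) (Az : A *m z = lam *: z).

Lemma left_eigenE j : \sum_i w i 0 * A i j = lam * w j 0.
Proof.
by move/matrixP: wA => /(_ 0 j); rewrite !mxE; under eq_bigr do rewrite mxE.
Qed.

Lemma right_eigenE i : \sum_j A i j * z j 0 = lam * z i 0.
Proof. by move/matrixP: Az => /(_ i 0); rewrite !mxE. Qed.

Lemma mass_mulmx (q : 'cV[R]_n) : mass w (A *m q) = lam * mass w q.
Proof.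
rewrite /mass; under eq_bigr do rewrite mxE mulr_sumr.
rewrite exchange_big mulr_sumr; apply: eq_bigr => j _.
by under eq_bigr do rewrite mulrA; rewrite -mulr_suml left_eigenE mulrA.
Qed.

Definition doob_kernel i j : R := A i j * z j 0 / (lam * z i 0).

Lemma doob_kernel_ge0 i j : 0 <= doob_kernel i j.
Proof. by rewrite divr_ge0 ?mulr_ge0 ?A_ge0 // ltW ?mulr_gt0. Qed.

Lemma doob_kernel_row_sum i : \sum_j doob_kernel i j = 1.
Proof.
by rewrite -mulr_suml right_eigenE divff // mulf_neq0 ?gt_eqF.
Qed.

Lemma doob_kernel_invariant j :
  \sum_i w i 0 * z i 0 * doob_kernel i j = w j 0 * z j 0.
Proof.
under eq_bigr => i _.
  have -> : w i 0 * z i 0 * doob_kernel i j = w i 0 * A i j * (z j 0 / lam).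
    by rewrite /doob_kernel; field; rewrite !gt_eqF.
over.
by rewrite -mulr_suml left_eigenE; field; rewrite gt_eqF.
Qed.

Lemma doob_kernel_ratio (q : 'cV[R]_n) i : mass w q != 0 ->
  \sum_j doob_kernel i j * (q j 0 / (z j 0 * mass w q))
  = (A *m q) i 0 / (z i 0 * mass w (A *m q)).
Proof.
move=> s_neq0; rewrite mass_mulmx mxE mulr_suml; apply: eq_bigr => j _.
by rewrite /doob_kernel; field; rewrite s_neq0 !gt_eqF.
Qed.

Lemma phi_divergence_mulmx_le (phi : R -> R) (q : 'cV[R]_n) :
  convex_on_nonneg phi -> (forall i, 0 <= q i 0) -> 0 < mass w q ->
  phi_divergence phi w z (A *m q) <= phi_divergence phi w z q.
Proof.
move=> phi_convex q_ge0 s_gt0.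
have x_ge0 j : 0 <= q j 0 / (z j 0 * mass w q).
  by rewrite divr_ge0 ?mulr_ge0 // ltW.
have := sum_convex_stochastic_le phi_convex
  (fun i => mulr_ge0 (ltW (w_gt0 i)) (ltW (z_gt0 i)))
  doob_kernel_ge0 doob_kernel_row_sum doob_kernel_invariant x_ge0.
under eq_bigr do rewrite doob_kernel_ratio ?gt_eqF //.
by rewrite /phi_divergence; under eq_bigr do rewrite mulrC mulrA;
   under [X in _ <= X]eq_bigr do rewrite mulrC mulrA.
Qed.

End PerronDivergence.

Section Relaxation.
Variables (R : realType) (n : nat) (C : 'M[R]_n) (mu h : R).

Lemma MhE i j : Mh C h i j = (1 - h) * (i == j)%:R + h * C i j.
Proof. by rewrite !mxE; ring. Qed.

Lemma Mh_ge0 : (forall i j, 0 <= C i j) -> 0 <= h <= 1 ->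
  forall i j, 0 <= Mh C h i j.
Proof.
move=> C_ge0 /andP[h_ge0 h_le1] i j; rewrite MhE.
by rewrite addr_ge0 ?mulr_ge0 ?C_ge0 ?ler0n // subr_ge0.
Qed.

Lemma Mh_left_eigen (w : 'cV[R]_n) : w^T *m C = mu *: w^T ->
  w^T *m Mh C h = (1 - h + h * mu) *: w^T.
Proof.
move=> wC; rewrite /Mh mulmxDr mulmx1 -scalemxAr mulmxBr mulmx1 wC.
by apply/matrixP => i j; rewrite !mxE; ring.
Qed.

Lemma Mh_right_eigen (z : 'cV[R]_n) : C *m z = mu *: z ->
  Mh C h *m z = (1 - h + h * mu) *: z.
Proof.
move=> Cz; rewrite /Mh mulmxDl mul1mx -scalemxAl mulmxBl mul1mx Cz.
by apply/matrixP => i j; rewrite !mxE; ring.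
Qed.

End Relaxation.

Lemma eigenvalue_ge0 (R : realType) (n : nat) (C : 'M[R]_n) (mu : R)
    (v : 'cV[R]_n) (i : 'I_n) :
  (forall i j, 0 <= C i j) -> (forall i, 0 < v i 0) -> C *m v = mu *: v ->
  0 <= mu.
Proof.
move=> C_ge0 v_gt0 /matrixP/(_ i 0); rewrite !mxE => Cv.
rewrite -(pmulr_lge0 _ (v_gt0 i)) -Cv.
by apply: sumr_ge0 => j _; rewrite mulr_ge0 // ltW.
Qed.

Lemma G_phiE (R : realType) (N k : nat) (phi : R -> R) (w z : 'cV[R]_(N.+1 - k))
    (p : 'cV[R]_N.+1) :
  G_phi k phi w z p =
  if mass w (transient_part k p) != 0
  then (phi_divergence phi w z (transient_part k p))%:E else +oo%E.
Proof. by []. Qed.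

Definition absorbing_closed (R : realType) (N k : nat) (M : 'M[R]_N.+1) :
    Prop :=
  forall i j : 'I_N.+1, (i < N.+1 - k)%N -> (N.+1 - k <= j)%N -> M i j = 0.

Section CanonicalForm.
Variables (R : realType) (N k : nat).

Lemma transient_part_mulmx (M : 'M[R]_N.+1) (p : 'cV[R]_N.+1) :
  absorbing_closed k M ->
  transient_part k (M *m p) = core k M *m transient_part k p.
Proof.
move=> M_closed; apply/matrixP => i j; rewrite ord1 !mxE.
rewrite (bigID (fun l : 'I_N.+1 => (l < N.+1 - k)%N)) /=.
rewrite [X in _ + X]big1 ?addr0; last first.
  by move=> l; rewrite -leqNgt => l_ge; rewrite M_closed ?mul0r //= ltn_ord.
rewrite (big_ord_narrow (leq_subr k N.+1)).
by apply: eq_bigr => l _; rewrite !mxE.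
Qed.

Lemma core_Mh (M : 'M[R]_N.+1) h : core k (Mh M h) = Mh (core k M) h.
Proof. by apply/matrixP => i j; rewrite !mxE. Qed.

Lemma absorbing_closed_Mh (M : 'M[R]_N.+1) h :
  absorbing_closed k M -> absorbing_closed k (Mh M h).
Proof.
move=> M_closed i j i_lt j_ge; rewrite MhE M_closed // mulr0 addr0.
suff /negbTE -> : i != j by rewrite mulr0.
by apply: contraTneq i_lt => ->; rewrite -leqNgt.
Qed.

Lemma transient_part_Mh (M : 'M[R]_N.+1) h (p : 'cV[R]_N.+1) :
  absorbing_closed k M ->
  transient_part k (Mh M h *m p) = Mh (core k M) h *m transient_part k p.
Proof.
move=> M_closed.
by rewrite transient_part_mulmx ?core_Mh //; apply: absorbing_closed_Mh.
Qed.

End CanonicalForm.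

Theorem proposition1 (R : realType) (N k : nat) (M : 'M[R]_N.+1) (mu : R)
  (w z : 'cV[R]_(N.+1 - k)) :
  admissible_canonical k M ->
  characteristic_triple k M mu w z ->
  micro_reversible k M w z ->
  (exists2 h0 : R, 0 < h0 &
     forall (phi : R -> R), convex_on_nonneg phi ->
     forall (h : R), 0 < h < h0 ->
     forall (p : 'cV[R]_N.+1), probability_vector p ->
       (G_phi k phi w z (Mh M h *m p) <= G_phi k phi w z p)%E) /\
  (forall (phi : R -> R), convex_on_nonneg phi ->
     (forall x : R, 0 <= x -> x - 1 <= phi x) ->
     forall (p : 'cV[R]_N.+1), probability_vector p ->
       (0 <= G_phi k phi w z p)%E).
Proof.
move=> [[_ k_lt] [[M_ge0 _] _] M_closed _ _] [_ [w_gt0 z_gt0] wC Cz [_ wz1]] _.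
have core_ge0 i j : 0 <= core k M i j by rewrite mxE.
have w_ge0 i : 0 <= w i 0 by apply: ltW.
have mu_ge0 : 0 <= mu.
  have n_gt0 : (0 < N.+1 - k)%N by lia.
  exact: (eigenvalue_ge0 (Ordinal n_gt0) core_ge0 z_gt0 Cz).
have pt_ge0 (p : 'cV[R]_N.+1) :
    probability_vector p -> forall i, 0 <= transient_part k p i 0.
  by case=> p_ge0 _ i; rewrite mxE.
split.
  exists 1 => // phi phi_convex h /andP[h_gt0 h_lt1] p /pt_ge0 q_ge0.
  have lam_gt0 : 0 < 1 - h + h * mu.
    by rewrite ltr_wpDr ?subr_gt0 // mulr_ge0 // ltW.
  have wMh := Mh_left_eigen h wC; have Mhz := Mh_right_eigen h Cz.
  have Mh_core_ge0 : forall i j, 0 <= Mh (core k M) h i j.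
    by apply: Mh_ge0; rewrite // (ltW h_gt0) (ltW h_lt1).
  rewrite !G_phiE transient_part_Mh // (mass_mulmx wMh).
  have [_|s_neq0] := eqVneq (mass w (transient_part k p)) 0.
    by rewrite leey.
  have s_gt0 := mass_gt0 w_ge0 q_ge0 s_neq0.
  rewrite mulf_neq0 ?gt_eqF //= lee_fin.
  exact: (phi_divergence_mulmx_le Mh_core_ge0 lam_gt0 w_gt0 z_gt0 wMh Mhz).
move=> phi _ phi_ge p /pt_ge0 q_ge0; rewrite G_phiE.
have [_|s_neq0] := eqVneq (mass w (transient_part k p)) 0.
  by rewrite le0y.
by rewrite lee_fin phi_divergence_ge0 // (mass_gt0 w_ge0 q_ge0 s_neq0).
Qed.
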